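(* Let $X$ be a Banach lattice with a bibasis, and let $D\subseteq X$ be a subset whose linear span is dense in $X$. Then there exists a u-frame $(x_j,f_j)_{j=1}^\infty$ of $X$ such that $x_j\in D$ for all $j\in\mathbb{N}$.
   Context: In a Banach lattice $X$, a sequence $(y_n)$ converges uniformly to $y$ (written $y_n\xrightarrow{u}y$) if there is a positive vector $w\in X$ (a regulator) such that for every $\varepsilon>0$ there is $N$ with $|y-y_n|\le\varepsilon w$ for all $n\ge N$. A sequence of pairs $(x_j,f_j)_{j=1}^\infty$ in $X\times X^*$ is a Schauder frame of $X$ if $x=\sum_{j=1}^\infty f_j(x)x_j$ in norm for all $x\in X$; it is a u-frame if moreover $\sum_{j=1}^n f_j(x)x_j\xrightarrow{u}x$ for every $x\in X$. A Schauder basis $(x_j)$ of $X$ with biorthogonal functionals $(x_j^* )$ is a bibasis if $\sum_{j=1}^n x_j^*(x)x_j\xrightarrow{u}x$ for every $x\in X$. *)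

From Stdlib Require Import Reals List.
Open Scope R_scope.

Record BanachLattice := {
  bl_car :> Type;
  bl_zero : bl_car;
  bl_add : bl_car -> bl_car -> bl_car;
  bl_opp : bl_car -> bl_car;
  bl_scal : R -> bl_car -> bl_car;
  bl_norm : bl_car -> R;
  bl_le : bl_car -> bl_car -> Prop;
  bl_sup : bl_car -> bl_car -> bl_car;
  bl_addA : forall x y z, bl_add x (bl_add y z) = bl_add (bl_add x y) z;
  bl_addC : forall x y, bl_add x y = bl_add y x;
  bl_add0 : forall x, bl_add x bl_zero = x;
  bl_addN : forall x, bl_add x (bl_opp x) = bl_zero;
  bl_scal1 : forall x, bl_scal 1 x = x;
  bl_scalA : forall a b x, bl_scal a (bl_scal b x) = bl_scal (a * b) x;
  bl_scalDr : forall a x y, bl_scal a (bl_add x y) = bl_add (bl_scal a x) (bl_scal a y);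
  bl_scalDl : forall a b x, bl_scal (a + b) x = bl_add (bl_scal a x) (bl_scal b x);
  bl_norm_ge0 : forall x, 0 <= bl_norm x;
  bl_norm_eq0 : forall x, bl_norm x = 0 -> x = bl_zero;
  bl_normZ : forall a x, bl_norm (bl_scal a x) = Rabs a * bl_norm x;
  bl_normD : forall x y, bl_norm (bl_add x y) <= bl_norm x + bl_norm y;
  bl_le_refl : forall x, bl_le x x;
  bl_le_antisym : forall x y, bl_le x y -> bl_le y x -> x = y;
  bl_le_trans : forall x y z, bl_le x y -> bl_le y z -> bl_le x z;
  bl_sup_l : forall x y, bl_le x (bl_sup x y);
  bl_sup_r : forall x y, bl_le y (bl_sup x y);
  bl_sup_least : forall x y z, bl_le x z -> bl_le y z -> bl_le (bl_sup x y) z;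
  bl_le_add : forall x y z, bl_le x y -> bl_le (bl_add x z) (bl_add y z);
  bl_le_scal : forall a x y, 0 <= a -> bl_le x y -> bl_le (bl_scal a x) (bl_scal a y);
  bl_norm_mono : forall x y,
      bl_le (bl_sup x (bl_opp x)) (bl_sup y (bl_opp y)) -> bl_norm x <= bl_norm y;
  bl_complete : forall s : nat -> bl_car,
      (forall eps, eps > 0 -> exists N, forall n m, (n >= N)%nat -> (m >= N)%nat ->
          bl_norm (bl_add (s n) (bl_opp (s m))) < eps) ->
      exists l, forall eps, eps > 0 -> exists N, forall n, (n >= N)%nat ->
          bl_norm (bl_add l (bl_opp (s n))) < eps
}.

Section Defs.
Variable X : BanachLattice.

Definition bsub (x y : X) : X := bl_add X x (bl_opp X y).
Definition babs (x : X) : X := bl_sup X x (bl_opp X x).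

Definition norm_conv (s : nat -> X) (l : X) : Prop :=
  forall eps, eps > 0 -> exists N, forall n, (n >= N)%nat -> bl_norm X (bsub l (s n)) < eps.

Definition u_conv (s : nat -> X) (l : X) : Prop :=
  exists w : X, bl_le X (bl_zero X) w /\
    forall eps, eps > 0 -> exists N, forall n, (n >= N)%nat ->
      bl_le X (babs (bsub l (s n))) (bl_scal X eps w).

(** partial sums  sum_{j < n} a_j x_j  (indices start at 0) *)
Fixpoint psum (a : nat -> R) (xs : nat -> X) (n : nat) : X :=
  match n with
  | O => bl_zero X
  | S k => bl_add X (psum a xs k) (bl_scal X (a k) (xs k))
  end.

Definition in_dual (f : X -> R) : Prop :=
  (forall x y, f (bl_add X x y) = f x + f y) /\
  (forall a x, f (bl_scal X a x) = a * f x) /\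
  (exists C, forall x, Rabs (f x) <= C * bl_norm X x).

Definition schauder_frame (xs : nat -> X) (fs : nat -> X -> R) : Prop :=
  (forall j, in_dual (fs j)) /\
  forall x, norm_conv (psum (fun j => fs j x) xs) x.

Definition u_frame (xs : nat -> X) (fs : nat -> X -> R) : Prop :=
  schauder_frame xs fs /\
  forall x, u_conv (psum (fun j => fs j x) xs) x.

Definition schauder_basis (xs : nat -> X) : Prop :=
  forall x, exists! a : nat -> R, norm_conv (psum a xs) x.

Definition bibasis (xs : nat -> X) : Prop :=
  schauder_basis xs /\
  forall x (a : nat -> R), norm_conv (psum a xs) x -> u_conv (psum a xs) x.

Fixpoint lincomb (l : list (R * X)) : X :=
  match l with
  | nil => bl_zero X
  | (c, v) :: l' => bl_add X (bl_scal X c v) (lincomb l')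
  end.

Definition in_span (D : X -> Prop) (y : X) : Prop :=
  exists l : list (R * X), Forall (fun p => D (snd p)) l /\ y = lincomb l.

Definition span_dense (D : X -> Prop) : Prop :=
  forall x eps, eps > 0 -> exists y, in_span D y /\ bl_norm X (bsub x y) < eps.

End Defs.

From Stdlib Require Import Reals List Lra Lia Classical ClassicalEpsilon FunctionalExtensionality.
Import ListNotations.
Open Scope R_scope.

(* The coefficient functionals x_j' of the bibasis are bounded (a Baire category
   argument), so for every n we may replace each x_j, j < n, by some z_{n,j} in the
   span of D so close to x_j that A_n x := sum_{j<n} x_j'(x) z_{n,j} satisfies
   |P_n x - A_n x| <= ||x|| V_n with ||V_n|| <= 8^-n, where P_n are the basis
   projections.  Expanding every z_{n,j} over D, the differences A_{n+1} - A_n become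
   finite sums of rank-one terms f(x) d with f in X^* and d in D; listing these terms
   block after block gives a frame whose partial sums run through the A_n.  Repeating
   the n-th block m_n times with weight 1/m_n makes every partial sum inside a block
   differ from some A_n by at most |A_{n+1} x - A_n x| + ||x|| v_n with ||v_n|| <= 2 4^-n.
   Since the positive vector W = sum_n 2^n v_n dominates 2^n v_n, the uniform
   convergence P_n x -> x carries over to the frame with regulator
   4 (w_x + ||x|| W). *)

Section VectorLattice.
Variable X : BanachLattice.
Local Notation add := (bl_add X).
Local Notation opp := (bl_opp X).
Local Notation scal := (bl_scal X).
Local Notation nrm := (bl_norm X).
Local Notation le := (bl_le X).
Local Notation zero := (bl_zero X).
Local Notation sub := (bsub X).
Local Notation abs := (babs X).

Lemma add0l x : add zero x = x.
Proof. rewrite bl_addC; apply bl_add0. Qed.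
Lemma addNl x : add (opp x) x = zero.
Proof. rewrite bl_addC; apply bl_addN. Qed.
Lemma add_cancel x y z : add x y = add x z -> y = z.
Proof.
  intro H. rewrite <- (add0l y), <- (add0l z), <- (addNl x), <- !bl_addA, H. reflexivity.
Qed.
Lemma opp_uniq x y : add x y = zero -> y = opp x.
Proof. intro H. apply (add_cancel x). rewrite H, bl_addN. reflexivity. Qed.
Lemma oppK x : opp (opp x) = x.
Proof. symmetry. apply opp_uniq. apply addNl. Qed.
Lemma opp0 : opp zero = zero.
Proof. symmetry. apply opp_uniq. apply bl_add0. Qed.
Lemma addACA a b c d : add (add a b) (add c d) = add (add a c) (add b d).
Proof.
  rewrite <- !bl_addA. f_equal. rewrite !bl_addA. f_equal. apply bl_addC.
Qed.
Lemma oppD x y : opp (add x y) = add (opp x) (opp y).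
Proof.
  symmetry. apply opp_uniq. rewrite addACA, !bl_addN, bl_add0. reflexivity.
Qed.
Lemma scal0l x : scal 0 x = zero.
Proof.
  apply (add_cancel (scal 0 x)). rewrite <- bl_scalDl, Rplus_0_l, bl_add0. reflexivity.
Qed.
Lemma scal0r a : scal a zero = zero.
Proof.
  apply (add_cancel (scal a zero)). rewrite <- bl_scalDr, !bl_add0. reflexivity.
Qed.
Lemma scalN1 x : scal (-1) x = opp x.
Proof.
  apply opp_uniq. rewrite <- (bl_scal1 X x) at 1. rewrite <- bl_scalDl.
  replace (1 + -1) with 0 by ring. apply scal0l.
Qed.
Lemma scalNl a x : scal (- a) x = opp (scal a x).
Proof. rewrite <- scalN1, bl_scalA. f_equal. ring. Qed.
Lemma scalNr a x : scal a (opp x) = opp (scal a x).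
Proof. rewrite <- !scalN1, !bl_scalA. f_equal. ring. Qed.
Lemma scal_add2 y : add y y = scal 2 y.
Proof. rewrite <- (bl_scal1 X y) at 1 2. rewrite <- bl_scalDl. f_equal. Qed.
Lemma scal_add4 y : add y (add (add y y) y) = scal 4 y.
Proof.
  rewrite <- (bl_scal1 X y). rewrite <- !bl_scalDl, bl_scalA. f_equal. ring.
Qed.

Lemma sub_diag x : sub x x = zero.
Proof. apply bl_addN. Qed.
Lemma sub0r x : sub x zero = x.
Proof. unfold bsub. rewrite opp0, bl_add0. auto. Qed.
Lemma sub_add x y z : sub x z = add (sub x y) (sub y z).
Proof.
  unfold bsub. rewrite bl_addA, <- (bl_addA _ x), addNl, bl_add0. reflexivity.
Qed.
Lemma sub_opp x y : sub y x = opp (sub x y).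
Proof. unfold bsub. rewrite oppD, oppK, bl_addC. reflexivity. Qed.
Lemma subDD a b c d : sub (add a b) (add c d) = add (sub a c) (sub b d).
Proof. unfold bsub. rewrite oppD, addACA. reflexivity. Qed.
Lemma subBB a b c d : sub (sub a b) (sub c d) = sub (sub a c) (sub b d).
Proof.
  change (sub (add a (opp b)) (add c (opp d)) = sub (sub a c) (sub b d)).
  rewrite subDD. unfold bsub at 3. f_equal. unfold bsub. rewrite oppD, !oppK. reflexivity.
Qed.
Lemma scal_sub a x y : scal a (sub x y) = sub (scal a x) (scal a y).
Proof. unfold bsub. rewrite bl_scalDr, scalNr. reflexivity. Qed.
Lemma add_sub x y : add (sub x y) y = x.
Proof. unfold bsub. rewrite <- bl_addA, addNl, bl_add0. auto. Qed.
Lemma sub_add_l x y : sub (add x y) y = x.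
Proof. unfold bsub. rewrite <- bl_addA, bl_addN, bl_add0. auto. Qed.
Lemma sub_add_r x y p : sub x (add y p) = sub (sub x y) p.
Proof. unfold bsub. rewrite oppD, bl_addA. auto. Qed.
Lemma sub_sub_r x p : sub x (sub x p) = p.
Proof. unfold bsub. rewrite oppD, oppK, bl_addA, bl_addN, add0l. auto. Qed.
Lemma sub_sub_add y w z : sub y (sub w z) = add (sub y w) z.
Proof. unfold bsub. rewrite oppD, oppK, bl_addA. auto. Qed.

Lemma nrm0 : nrm zero = 0.
Proof. rewrite <- (scal0l zero), bl_normZ, Rabs_R0. ring. Qed.
Lemma nrm_opp x : nrm (opp x) = nrm x.
Proof. rewrite <- scalN1, bl_normZ, Rabs_left by lra. ring. Qed.
Lemma nrm_sub_sym x y : nrm (sub x y) = nrm (sub y x).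
Proof. rewrite (sub_opp x y), nrm_opp. reflexivity. Qed.
Lemma nrm_tri x y z : nrm (sub x z) <= nrm (sub x y) + nrm (sub y z).
Proof. rewrite (sub_add x y z). apply bl_normD. Qed.
Lemma nrm_sub_le x y : nrm (sub x y) <= nrm x + nrm y.
Proof. unfold bsub. rewrite <- (nrm_opp y). apply bl_normD. Qed.

Lemma le_add2 a b c d : le a b -> le c d -> le (add a c) (add b d).
Proof.
  intros H1 H2. apply bl_le_trans with (add b c). apply bl_le_add; auto.
  rewrite (bl_addC _ b c), (bl_addC _ b d). apply bl_le_add; auto.
Qed.
Lemma le_opp a b : le a b -> le (opp b) (opp a).
Proof.
  intro H. pose proof (bl_le_add X _ _ (add (opp a) (opp b)) H) as H'.
  rewrite bl_addA, bl_addN, add0l in H'.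
  rewrite (bl_addC _ (opp a)), bl_addA, bl_addN, add0l in H'. auto.
Qed.
Lemma le_sub0 a b : le a b -> le zero (sub b a).
Proof.
  intro H. unfold bsub. rewrite <- (bl_addN X a). apply bl_le_add. auto.
Qed.
Lemma le_sub0_inv a b : le zero (sub b a) -> le a b.
Proof.
  intro H. apply (bl_le_add X _ _ a) in H. rewrite add0l, add_sub in H. auto.
Qed.
Lemma add_nonneg a b : le zero a -> le zero b -> le zero (add a b).
Proof. intros. rewrite <- (bl_add0 X zero). apply le_add2; auto. Qed.
Lemma le_add_r a b : le zero b -> le a (add a b).
Proof.
  intros. rewrite <- (bl_add0 X a) at 1. rewrite (bl_addC _ a zero), (bl_addC _ a b).
  apply bl_le_add; auto.
Qed.
Lemma scal_nonneg a y : 0 <= a -> le zero y -> le zero (scal a y).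
Proof. intros. rewrite <- (scal0r a). apply bl_le_scal; auto. Qed.
Lemma scal_mono a b y : le zero y -> a <= b -> le (scal a y) (scal b y).
Proof.
  intros Hy Hab. replace b with (a + (b - a)) by ring. rewrite bl_scalDl.
  rewrite <- (bl_add0 X (scal a y)) at 1. rewrite (bl_addC _ (scal a y) zero).
  rewrite (bl_addC _ (scal a y)). apply bl_le_add.
  rewrite <- (scal0r (b - a)). apply bl_le_scal; auto. lra.
Qed.
Lemma le0_half y : le zero (scal 2 y) -> le zero y.
Proof.
  intro H. apply (bl_le_scal X (/2)) in H; [|lra].
  rewrite scal0r, bl_scalA in H. replace (/2*2) with 1 in H by field.
  rewrite bl_scal1 in H. auto.
Qed.

Lemma abs_ge x : le x (abs x).
Proof. apply bl_sup_l. Qed.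
Lemma abs_geN x : le (opp x) (abs x).
Proof. apply bl_sup_r. Qed.
Lemma abs_nonneg x : le zero (abs x).
Proof.
  apply le0_half. rewrite <- scal_add2. rewrite <- (bl_addN X x).
  apply le_add2; [apply abs_ge|apply abs_geN].
Qed.
Lemma abs_pos y : le zero y -> abs y = y.
Proof.
  intro H. apply bl_le_antisym.
  - apply bl_sup_least. apply bl_le_refl. apply bl_le_trans with zero; auto.
    rewrite <- opp0. apply le_opp; auto.
  - apply abs_ge.
Qed.
Lemma abs_abs x : abs (abs x) = abs x.
Proof. apply abs_pos, abs_nonneg. Qed.
Lemma abs_zero : abs zero = zero.
Proof. apply abs_pos, bl_le_refl. Qed.
Lemma nrm_abs x : nrm (abs x) = nrm x.
Proof.
  apply Rle_antisym; apply bl_norm_mono; fold (abs x) (abs (abs x));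
  rewrite abs_abs; apply bl_le_refl.
Qed.
Lemma nrm_le_abs x y : le (abs x) y -> nrm x <= nrm y.
Proof.
  intro H. apply bl_norm_mono. fold (abs x) (abs y). rewrite (abs_pos y); auto.
  apply bl_le_trans with (abs x); auto. apply abs_nonneg.
Qed.
Lemma abs_add x y : le (abs (add x y)) (add (abs x) (abs y)).
Proof.
  apply bl_sup_least. apply le_add2; apply abs_ge.
  rewrite oppD. apply le_add2; apply abs_geN.
Qed.
Lemma abs_opp x : abs (opp x) = abs x.
Proof.
  unfold babs. rewrite oppK. apply bl_le_antisym; apply bl_sup_least;
  first [apply bl_sup_l | apply bl_sup_r].
Qed.
Lemma abs_sub_sym x y : abs (sub x y) = abs (sub y x).
Proof. rewrite (sub_opp x y), abs_opp. auto. Qed.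
Lemma abs_sub_le a b : le (abs (sub a b)) (add (abs a) (abs b)).
Proof. unfold bsub. rewrite <- (abs_opp b). apply abs_add. Qed.
Lemma abs_tri x y z : le (abs (sub x z)) (add (abs (sub x y)) (abs (sub y z))).
Proof. rewrite (sub_add x y z). apply abs_add. Qed.
Lemma abs_scal c x : le (abs (scal c x)) (scal (Rabs c) (abs x)).
Proof.
  destruct (Rle_dec 0 c) as [Hc|Hc].
  - rewrite Rabs_pos_eq by auto. apply bl_sup_least.
    + apply bl_le_scal; auto; apply abs_ge.
    + rewrite <- scalNr. apply bl_le_scal; auto; apply abs_geN.
  - rewrite Rabs_left by lra. apply bl_sup_least.
    + replace c with (- - c) at 1 by ring. rewrite scalNl, <- scalNr.
      apply bl_le_scal; [lra|apply abs_geN].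
    + replace c with (- - c) at 1 by ring. rewrite scalNl, oppK.
      apply bl_le_scal; [lra|apply abs_ge].
Qed.

Lemma norm_conv_ge0 (s : nat -> X) l :
  (forall n, le zero (s n)) -> norm_conv X s l -> le zero l.
Proof.
  intros Hs Hc. set (ng := bl_sup X (opp l) zero).
  assert (Hng0 : le zero ng) by apply bl_sup_r.
  assert (Hb : forall n, nrm ng <= nrm (sub l (s n))).
  { intro n. apply bl_norm_mono. fold (abs ng) (abs (sub l (s n))).
    rewrite (abs_pos ng Hng0), abs_sub_sym. apply bl_sup_least.
    - apply bl_le_trans with (sub (s n) l); [|apply abs_ge].
      unfold bsub. rewrite (bl_addC _ (s n)). rewrite <- (bl_add0 X (opp l)) at 1.
      apply le_add2; [apply bl_le_refl|auto].
    - apply abs_nonneg. }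
  assert (H0 : nrm ng = 0).
  { apply Rle_antisym; [|apply bl_norm_ge0].
    apply Rnot_lt_le. intro Hp. destruct (Hc _ Hp) as [N HN].
    specialize (HN N (le_n N)). specialize (Hb N). lra. }
  apply bl_norm_eq0 in H0.
  assert (le (opp l) zero) by (rewrite <- H0; apply bl_sup_l).
  apply le_opp in H. rewrite oppK, opp0 in H. auto.
Qed.

End VectorLattice.

Lemma Rle_of_le_plus_eps a b : (forall eps, eps > 0 -> a <= b + eps) -> a <= b.
Proof.
  intro H. apply Rnot_lt_le. intro Hlt. specialize (H ((a - b)/2)). lra.
Qed.

Lemma half_pow_pos n : 0 < (/2)^n.
Proof. apply pow_lt. lra. Qed.

Lemma half_pow_S n : (/2)^(S n) = /2 * (/2)^n.
Proof. reflexivity. Qed.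

Lemma half_pow_small eps : eps > 0 -> exists N, forall n, (n >= N)%nat -> (/2)^n < eps.
Proof.
  intro He. destruct (pow_lt_1_zero (/2)) with eps as [N HN].
  - rewrite Rabs_pos_eq; lra.
  - auto.
  - exists N. intros n Hn. specialize (HN n Hn).
    rewrite Rabs_pos_eq in HN; auto. left; apply half_pow_pos.
Qed.

Lemma half_pow_small_mul K eps : 0 <= K -> eps > 0 ->
  exists N, forall n, (n >= N)%nat -> K * (/2)^n < eps.
Proof.
  intros HK He. destruct (half_pow_small (eps / (K + 1))) as [N HN].
  { apply Rdiv_lt_0_compat; lra. }
  exists N. intros n Hn. specialize (HN n Hn). pose proof (half_pow_pos n).
  apply Rmult_lt_compat_l with (r := K + 1) in HN; [|lra].
  replace ((K + 1) * (eps / (K + 1))) with eps in HN by (field; lra). nra.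
Qed.

Lemma geometric_limit_R (s : nat -> R) K :
  (forall n, Rabs (s (S n) - s n) <= K * (/2)^n) ->
  exists l, Un_cv s l /\ forall n, Rabs (l - s n) <= 2 * K * (/2)^n.
Proof.
  intro H.
  assert (HK : 0 <= K).
  { specialize (H O). pose proof (Rabs_pos (s 1%nat - s 0%nat)). simpl in H. lra. }
  assert (Htail : forall n d, Rabs (s (n + d)%nat - s n) <= 2 * K * ((/2)^n - (/2)^(n+d))).
  { intros n d. induction d.
    - rewrite Nat.add_0_r. replace (s n - s n) with 0 by ring. rewrite Rabs_R0. lra.
    - rewrite Nat.add_succ_r.
      replace (s (S (n + d)) - s n) with
        ((s (S (n+d)) - s (n+d)%nat) + (s (n+d)%nat - s n)) by ring.
      eapply Rle_trans. apply Rabs_triang. specialize (H (n+d)%nat).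
      rewrite half_pow_S. lra. }
  assert (Hle : forall n m, (n <= m)%nat -> Rabs (s m - s n) <= 2 * K * (/2)^n).
  { intros n m Hnm. replace m with (n + (m - n))%nat by lia. eapply Rle_trans.
    apply Htail. pose proof (half_pow_pos (n + (m - n))). nra. }
  assert (HC : Cauchy_crit s).
  { intros eps He. destruct (half_pow_small_mul (2 * K) eps) as [N HN]; [lra|auto|].
    exists N. intros n m Hn Hm. unfold Rdist.
    destruct (Nat.le_ge_cases n m).
    - rewrite Rabs_minus_sym. eapply Rle_lt_trans. apply Hle; auto. apply HN; auto.
    - eapply Rle_lt_trans. apply Hle; auto. apply HN; auto. }
  destruct (R_complete s HC) as [l Hl]. exists l. split; auto.
  intro n. apply Rle_of_le_plus_eps. intros eps He. destruct (Hl eps He) as [N HN].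
  specialize (HN (max N n) (Nat.le_max_l _ _)). unfold Rdist in HN.
  specialize (Hle n (max N n) (Nat.le_max_r _ _)).
  replace (l - s n) with ((l - s (max N n)) + (s (max N n) - s n)) by ring.
  eapply Rle_trans. apply Rabs_triang. rewrite Rabs_minus_sym in HN. lra.
Qed.

Section Convergence.
Variable X : BanachLattice.
Local Notation add := (bl_add X).
Local Notation scal := (bl_scal X).
Local Notation nrm := (bl_norm X).
Local Notation le := (bl_le X).
Local Notation zero := (bl_zero X).
Local Notation sub := (bsub X).
Local Notation abs := (babs X).

Lemma norm_conv_ext (s t : nat -> X) l :
  (forall n, s n = t n) -> norm_conv X s l -> norm_conv X t l.
Proof.
  intros H Hc eps He. destruct (Hc eps He) as [N HN]. exists N. intros n Hn.
  rewrite <- H. auto.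
Qed.

Lemma norm_convD (s t : nat -> X) l m : norm_conv X s l -> norm_conv X t m ->
  norm_conv X (fun n => add (s n) (t n)) (add l m).
Proof.
  intros H1 H2 eps He.
  destruct (H1 (eps/2)) as [N1 HN1]; [lra|]. destruct (H2 (eps/2)) as [N2 HN2]; [lra|].
  exists (max N1 N2). intros n Hn. rewrite subDD.
  eapply Rle_lt_trans. apply bl_normD.
  specialize (HN1 n ltac:(lia)). specialize (HN2 n ltac:(lia)). lra.
Qed.

Lemma norm_convZ (s : nat -> X) l c : norm_conv X s l ->
  norm_conv X (fun n => scal c (s n)) (scal c l).
Proof.
  intros H eps He. pose proof (Rabs_pos c).
  destruct (H (eps / (Rabs c + 1))) as [N HN].
  { apply Rdiv_lt_0_compat; lra. }
  exists N. intros n Hn. rewrite <- scal_sub, bl_normZ.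
  specialize (HN n Hn). pose proof (bl_norm_ge0 X (sub l (s n))).
  apply Rle_lt_trans with ((Rabs c + 1) * nrm (sub l (s n))). nra.
  apply Rmult_lt_compat_l with (r := Rabs c + 1) in HN; [|lra].
  replace ((Rabs c + 1) * (eps / (Rabs c + 1))) with eps in HN by (field; lra). auto.
Qed.

Lemma norm_conv_dist_le (s : nat -> X) l y B n : norm_conv X s l ->
  (forall m, (m >= n)%nat -> nrm (sub (s m) y) <= B) -> nrm (sub l y) <= B.
Proof.
  intros Hc Hb. apply Rle_of_le_plus_eps. intros eps He. destruct (Hc eps He) as [N HN].
  specialize (HN (max N n) (Nat.le_max_l _ _)). specialize (Hb (max N n) (Nat.le_max_r _ _)).
  eapply Rle_trans. apply (nrm_tri X l (s (max N n)) y). lra.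
Qed.

Lemma u_conv_norm_conv (s : nat -> X) l : u_conv X s l -> norm_conv X s l.
Proof.
  intros [w [Hw H]] eps He. pose proof (bl_norm_ge0 X w).
  assert (Hd : 0 < eps / (nrm w + 1)) by (apply Rdiv_lt_0_compat; lra).
  destruct (H _ Hd) as [N HN].
  exists N. intros n Hn. specialize (HN n Hn).
  apply nrm_le_abs in HN. rewrite bl_normZ, Rabs_pos_eq in HN by lra.
  eapply Rle_lt_trans. apply HN.
  apply Rlt_le_trans with ((eps / (nrm w + 1)) * (nrm w + 1)). nra.
  right. field. lra.
Qed.

Lemma geometric_tail_le (s : nat -> X) K :
  (forall n, nrm (sub (s (S n)) (s n)) <= K * (/2)^n) ->
  forall n m, (n <= m)%nat -> nrm (sub (s m) (s n)) <= 2 * K * (/2)^n.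
Proof.
  intros H.
  assert (HK : 0 <= K).
  { specialize (H O). pose proof (bl_norm_ge0 X (sub (s 1%nat) (s 0%nat))). simpl in H. lra. }
  assert (Htail : forall n d, nrm (sub (s (n + d)%nat) (s n)) <= 2 * K * ((/2)^n - (/2)^(n+d))).
  { intros n d. induction d.
    - rewrite Nat.add_0_r, sub_diag, nrm0. lra.
    - rewrite Nat.add_succ_r. eapply Rle_trans. apply (nrm_tri X _ (s (n+d)%nat)).
      specialize (H (n+d)%nat). rewrite half_pow_S. lra. }
  intros n m Hnm. replace m with (n + (m - n))%nat by lia. eapply Rle_trans.
  apply Htail. pose proof (half_pow_pos (n + (m - n))). nra.
Qed.

Lemma geometric_limit (s : nat -> X) K :
  (forall n, nrm (sub (s (S n)) (s n)) <= K * (/2)^n) ->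
  exists l, norm_conv X s l /\ forall n, nrm (sub l (s n)) <= 2 * K * (/2)^n.
Proof.
  intro H. pose proof (geometric_tail_le s K H) as Hle.
  assert (HK : 0 <= K).
  { specialize (H O). pose proof (bl_norm_ge0 X (sub (s 1%nat) (s 0%nat))). simpl in H. lra. }
  destruct (bl_complete X s) as [l Hl].
  { intros eps He. destruct (half_pow_small_mul (2 * K) eps) as [N HN]; [lra|auto|].
    exists N. intros n m Hn Hm. destruct (Nat.le_ge_cases n m).
    - fold (sub (s n) (s m)). rewrite nrm_sub_sym.
      eapply Rle_lt_trans. apply Hle; auto. apply HN; auto.
    - eapply Rle_lt_trans. apply Hle; auto. apply HN; auto. }
  exists l. split; [exact Hl|].
  intro n. apply (norm_conv_dist_le s l (s n) _ n); [exact Hl|]. intros m Hm.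
  apply Hle. lia.
Qed.

Lemma psum_add a b (xs : nat -> X) n :
  psum X (fun j => a j + b j) xs n = add (psum X a xs n) (psum X b xs n).
Proof.
  induction n; simpl. rewrite bl_add0; auto.
  rewrite IHn, bl_scalDl, addACA. auto.
Qed.
Lemma psum_scal c a (xs : nat -> X) n :
  psum X (fun j => c * a j) xs n = scal c (psum X a xs n).
Proof.
  induction n; simpl. rewrite scal0r; auto.
  rewrite IHn, bl_scalDr, bl_scalA. auto.
Qed.
Lemma psum_sub a b (xs : nat -> X) n :
  psum X (fun j => a j - b j) xs n = sub (psum X a xs n) (psum X b xs n).
Proof.
  unfold Rminus. rewrite psum_add. unfold bsub. f_equal.
  rewrite <- scalN1, <- psum_scal. f_equal. apply functional_extensionality. intro. ring.
Qed.
Lemma psum_vsub a (u v : nat -> X) n :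
  psum X a (fun j => sub (u j) (v j)) n = sub (psum X a u n) (psum X a v n).
Proof.
  induction n; simpl. rewrite sub_diag; auto.
  rewrite IHn, scal_sub, subDD. auto.
Qed.
Lemma psum_S_sub a (xs : nat -> X) n :
  sub (psum X a xs (S n)) (psum X a xs n) = scal (a n) (xs n).
Proof. simpl. rewrite bl_addC. apply sub_add_l. Qed.
Lemma psum_zero (xs : nat -> X) n : psum X (fun _ => 0) xs n = zero.
Proof. induction n; simpl; auto. rewrite IHn, scal0l, bl_add0. auto. Qed.
Lemma psum_nonneg (c : nat -> R) (ys : nat -> X) n :
  (forall j, 0 <= c j /\ le zero (ys j)) -> le zero (psum X c ys n).
Proof.
  intro H. induction n. apply bl_le_refl. simpl. apply add_nonneg; auto.
  apply scal_nonneg; apply H.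
Qed.
Lemma nrm_psum_le a (xs : nat -> X) n B :
  (forall j, (j < n)%nat -> nrm (scal (a j) (xs j)) <= B) -> nrm (psum X a xs n) <= INR n * B.
Proof.
  induction n; intro H. simpl. rewrite nrm0. lra.
  change (psum X a xs (S n)) with (add (psum X a xs n) (scal (a n) (xs n))).
  eapply Rle_trans. apply bl_normD. rewrite S_INR.
  assert (nrm (psum X a xs n) <= INR n * B) by (apply IHn; intros; apply H; lia).
  specialize (H n ltac:(lia)). lra.
Qed.
Lemma abs_psum_le a (xs ys : nat -> X) b c n :
  (forall j, (j < n)%nat -> le (abs (scal (a j) (xs j))) (scal c (scal (b j) (ys j)))) ->
  le (abs (psum X a xs n)) (scal c (psum X b ys n)).
Proof.
  induction n; intro H; simpl.
  - rewrite abs_zero, scal0r. apply bl_le_refl.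
  - eapply bl_le_trans. apply abs_add. rewrite bl_scalDr. apply le_add2.
    + apply IHn; intros; apply H; lia.
    + apply H; lia.
Qed.

End Convergence.

Section Baire.
Variable X : BanachLattice.
Local Notation nrm := (bl_norm X).
Local Notation zero := (bl_zero X).
Local Notation sub := (bsub X).

Definition closed_set (F : X -> Prop) : Prop :=
  forall x, (forall eps, eps > 0 -> exists y, F y /\ nrm (sub x y) < eps) -> F x.

Definition has_interior (F : X -> Prop) : Prop :=
  exists c r, r > 0 /\ forall x, nrm (sub x c) < r -> F x.

Definition avoiding_ball (F : X -> Prop) c r c' r' : Prop :=
  0 < r' /\ r' <= r/2 /\ nrm (sub c' c) <= r/2 /\ forall z, nrm (sub z c') <= r' -> ~ F z.

Lemma closed_ball_avoiding (F : X -> Prop) c r :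
  closed_set F -> ~ has_interior F -> r > 0 -> exists c' r', avoiding_ball F c r c' r'.
Proof.
  intros Hcl Hno Hr.
  assert (Hx : exists x, nrm (sub x c) < r/2 /\ ~ F x).
  { apply NNPP; intro H. apply Hno. exists c, (r/2). split. lra.
    intros x Hx. apply NNPP. intro Hf. apply H. exists x; auto. }
  destruct Hx as [x [Hx Hf]].
  assert (He : exists eps, eps > 0 /\ forall y, F y -> nrm (sub x y) >= eps).
  { apply NNPP; intro H. apply Hf, Hcl. intros eps He. apply NNPP; intro H2.
    apply H. exists eps. split; auto. intros y Hy. apply Rnot_lt_ge. intro Hl.
    apply H2. exists y; auto. }
  destruct He as [eps [He Heps]].
  exists x, (Rmin (eps/2) (r/2)). split; [|split; [|split]].
  - apply Rmin_glb_lt; lra.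
  - apply Rmin_r.
  - lra.
  - intros z Hz Hfz. specialize (Heps z Hfz). rewrite nrm_sub_sym in Heps.
    pose proof (Rmin_l (eps/2) (r/2)). lra.
Qed.

Section NestedBalls.
Variable F : nat -> X -> Prop.
Variable g : nat * X * R -> X * R.
Hypothesis g_avoiding : forall k c r, r > 0 ->
  avoiding_ball (F k) c r (fst (g (k, c, r))) (snd (g (k, c, r))).

Fixpoint nested_balls (k : nat) : X * R :=
  match k with
  | O => (zero, 1)
  | S k' => g (k', fst (nested_balls k'), snd (nested_balls k'))
  end.

Local Notation centre k := (fst (nested_balls k)).
Local Notation radius k := (snd (nested_balls k)).

Lemma nested_balls_avoiding k :
  0 < radius k /\ avoiding_ball (F k) (centre k) (radius k) (centre (S k)) (radius (S k)).
Proof.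
  induction k.
  - simpl. split; [lra|]. apply g_avoiding; lra.
  - destruct IHk as [_ [Hp _]]. split; [exact Hp|]. apply g_avoiding. exact Hp.
Qed.

Lemma nested_balls_limit : exists l, forall k, nrm (sub l (centre (S k))) <= radius (S k).
Proof.
  assert (Hr : forall k, radius k <= (/2)^k).
  { induction k. simpl; lra.
    destruct (nested_balls_avoiding k) as [_ [_ [H _]]]. rewrite half_pow_S. lra. }
  assert (Ht : forall n d, nrm (sub (centre (n + d)%nat) (centre n)) <= radius n - radius (n + d)%nat).
  { intros n d. induction d.
    - rewrite Nat.add_0_r, sub_diag, nrm0. lra.
    - rewrite Nat.add_succ_r. eapply Rle_trans. apply (nrm_tri X _ (centre (n+d)%nat)).
      destruct (nested_balls_avoiding (n+d)%nat) as [_ [_ [H1 [H2 _]]]]. lra. }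
  destruct (geometric_limit X (fun k => centre k) (/2)) as [l [Hl _]].
  { intro n. destruct (nested_balls_avoiding n) as [_ [_ [_ [H _]]]]. specialize (Hr n). lra. }
  exists l. intro k. apply (norm_conv_dist_le X _ l _ _ (S k) Hl). intros m Hm.
  replace m with (S k + (m - S k))%nat by lia. eapply Rle_trans. apply Ht.
  destruct (nested_balls_avoiding (S k + (m - S k))%nat) as [H _]. lra.
Qed.

End NestedBalls.

Lemma baire (F : nat -> X -> Prop) :
  (forall k, closed_set (F k)) -> (forall x, exists k, F k x) ->
  exists k, has_interior (F k).
Proof.
  intros Hcl Hcov. apply NNPP. intro Hno.
  destruct (choice (fun (t : nat * X * R) (o : X * R) =>
     snd t > 0 -> avoiding_ball (F (fst (fst t))) (snd (fst t)) (snd t) (fst o) (snd o)))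
    as [g Hg].
  { intros [[k c] r]. simpl. destruct (Rlt_dec 0 r) as [Hr|Hr].
    - destruct (closed_ball_avoiding (F k) c r (Hcl k)) as [c' [r' H]].
      + intro Hi. apply Hno. exists k. exact Hi.
      + exact Hr.
      + exists (c', r'). auto.
    - exists (zero, 0). intro. lra. }
  assert (Hg' : forall k c r, r > 0 ->
    avoiding_ball (F k) c r (fst (g (k, c, r))) (snd (g (k, c, r)))).
  { intros k c r Hr. apply (Hg (k, c, r)). exact Hr. }
  destruct (nested_balls_limit F g Hg') as [l Hl].
  destruct (Hcov l) as [k Hk].
  destruct (nested_balls_avoiding F g Hg' k) as [_ [_ [_ [_ H]]]].
  exact (H l (Hl k) Hk).
Qed.

End Baire.

Section SchauderBasis.
Variable X : BanachLattice.
Local Notation add := (bl_add X).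
Local Notation scal := (bl_scal X).
Local Notation nrm := (bl_norm X).
Local Notation zero := (bl_zero X).
Local Notation sub := (bsub X).

Variable e : nat -> X.
Variable coef : X -> nat -> R.
Hypothesis coef_conv : forall x, norm_conv X (psum X (coef x) e) x.
Hypothesis coef_uniq : forall x b, norm_conv X (psum X b e) x -> b = coef x.

Definition proj n x := psum X (coef x) e n.

Lemma coef_add x y : coef (add x y) = fun j => coef x j + coef y j.
Proof.
  symmetry. apply coef_uniq. eapply norm_conv_ext.
  - intro n. symmetry. apply psum_add.
  - apply norm_convD; auto.
Qed.
Lemma coef_scal c x : coef (scal c x) = fun j => c * coef x j.
Proof.
  symmetry. apply coef_uniq. eapply norm_conv_ext.
  - intro n. symmetry. apply psum_scal.
  - apply norm_convZ; auto.
Qed.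
Lemma coef_sub x y : coef (sub x y) = fun j => coef x j - coef y j.
Proof.
  unfold bsub. rewrite <- scalN1, coef_add, coef_scal.
  apply functional_extensionality. intro. ring.
Qed.
Lemma coef_zero : coef zero = fun _ => 0.
Proof.
  symmetry. apply coef_uniq. intros eps He. exists O. intros n _.
  rewrite psum_zero, sub_diag, nrm0. lra.
Qed.
Lemma proj_sub n x y : proj n (sub x y) = sub (proj n x) (proj n y).
Proof. unfold proj. rewrite coef_sub. apply psum_sub. Qed.
Lemma proj_add n x y : proj n (add x y) = add (proj n x) (proj n y).
Proof. unfold proj. rewrite coef_add. apply psum_add. Qed.
Lemma proj_scal n c x : proj n (scal c x) = scal c (proj n x).
Proof. unfold proj. rewrite coef_scal. apply psum_scal. Qed.
Lemma proj_zero n : proj n zero = zero.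
Proof. unfold proj. rewrite coef_zero. apply psum_zero. Qed.
Lemma proj_S_sub n x : sub (proj (S n) x) (proj n x) = scal (coef x n) (e n).
Proof. apply psum_S_sub. Qed.

Lemma basis_nrm_pos j : 0 < nrm (e j).
Proof.
  destruct (Rlt_le_dec 0 (nrm (e j))) as [H|H]; auto. exfalso.
  assert (Hz : e j = zero) by (apply bl_norm_eq0; pose proof (bl_norm_ge0 X (e j)); lra).
  set (b := fun k => if Nat.eq_dec k j then 1 else 0).
  assert (Hb : forall n, psum X b e n = zero).
  { induction n; simpl; auto. rewrite IHn, add0l. unfold b.
    destruct (Nat.eq_dec n j). subst. rewrite Hz. apply scal0r. apply scal0l. }
  assert (Hb0 : b = coef zero).
  { apply coef_uniq. intros eps He. exists O. intros n _. rewrite Hb, sub_diag, nrm0. lra. }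
  rewrite coef_zero in Hb0. apply (f_equal (fun f => f j)) in Hb0. unfold b in Hb0.
  destruct (Nat.eq_dec j j); [lra|congruence].
Qed.

Lemma coef_abs_le x j : Rabs (coef x j) * nrm (e j) <= nrm (proj (S j) x) + nrm (proj j x).
Proof. rewrite <- bl_normZ, <- proj_S_sub. apply nrm_sub_le. Qed.

Definition proj_bounded k x := forall n, nrm (proj n x) <= k.

Definition near_proj_bounded (k : nat) x :=
  forall eps, eps > 0 -> exists y, proj_bounded (INR k) y /\ nrm (sub x y) < eps.

Lemma proj_bounded_pointwise x : exists k, proj_bounded k x.
Proof.
  destruct (coef_conv x 1) as [N HN]; [lra|].
  assert (Hm : forall m, exists k, forall n, (n < m)%nat -> nrm (proj n x) <= k).
  { induction m. exists 0. intros; lia.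
    destruct IHm as [k Hk]. exists (Rmax k (nrm (proj m x))). intros n Hn.
    destruct (Nat.eq_dec n m). subst. apply Rmax_r.
    eapply Rle_trans. apply Hk. lia. apply Rmax_l. }
  destruct (Hm N) as [k Hk]. exists (Rmax k (nrm x + 1)). intro n.
  destruct (Nat.lt_ge_cases n N).
  - eapply Rle_trans. apply Hk; auto. apply Rmax_l.
  - eapply Rle_trans; [|apply Rmax_r]. specialize (HN n H).
    rewrite <- (sub_sub_r X x (proj n x)). eapply Rle_trans. apply nrm_sub_le.
    unfold proj in *. lra.
Qed.

Lemma near_proj_bounded_closed k : closed_set X (near_proj_bounded k).
Proof.
  intros x Hx eps He. destruct (Hx (eps/2)) as [y [Hy Hxy]]; [lra|].
  destruct (Hy (eps/2)) as [z [Hz Hyz]]; [lra|]. exists z. split; auto.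
  eapply Rle_lt_trans. apply (nrm_tri X x y z). lra.
Qed.

Lemma near_proj_bounded_cover x : exists k, near_proj_bounded k x.
Proof.
  destruct (proj_bounded_pointwise x) as [k Hk].
  destruct (INR_unbounded k) as [m Hm]. exists m. intros eps He. exists x. split.
  - intro n. specialize (Hk n). lra.
  - rewrite sub_diag, nrm0. lra.
Qed.

(* Baire gives a ball B(c, r) in the closure of some proj_bounded k; the differences
   of two points of it cover the ball B(0, r). *)
Lemma small_near_proj_bounded : exists K r, 0 <= K /\ r > 0 /\
  forall y, nrm y < r -> forall eps, eps > 0 ->
    exists z, proj_bounded K z /\ nrm (sub y z) < eps.
Proof.
  destruct (baire X near_proj_bounded near_proj_bounded_closed near_proj_bounded_cover)
    as [k [c [r [Hr Hball]]]].
  exists (2 * INR k), r. pose proof (pos_INR k). split; [lra|split; [exact Hr|]].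
  intros y Hy eps He.
  assert (Hcy : near_proj_bounded k (add c y))
    by (apply Hball; rewrite (bl_addC _ c y), sub_add_l; auto).
  destruct (Hcy (eps/2)) as [u [Hu Hcu]]; [lra|].
  assert (Hc : near_proj_bounded k c) by (apply Hball; rewrite sub_diag, nrm0; lra).
  destruct (Hc (eps/2)) as [v [Hv Hcv]]; [lra|].
  exists (sub u v). split.
  - intro n. rewrite proj_sub. eapply Rle_trans. apply nrm_sub_le.
    specialize (Hu n); specialize (Hv n). lra.
  - replace (sub y (sub u v)) with (sub (sub (add c y) u) (sub c v)).
    + eapply Rle_lt_trans. apply nrm_sub_le. lra.
    + rewrite subBB, (bl_addC _ c y), sub_add_l. auto.
Qed.

Lemma proj_bounded_half_approx : exists M, 0 <= M /\
  forall y, exists z, proj_bounded (M * nrm y) z /\ nrm (sub y z) <= nrm y / 2.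
Proof.
  destruct small_near_proj_bounded as [K [r [HK [Hr Hsmall]]]].
  exists (2 * K / r). split.
  { apply Rmult_le_pos; [lra|left; apply Rinv_0_lt_compat; lra]. }
  intro y. destruct (Req_dec (nrm y) 0) as [H0|H0].
  - exists zero. apply bl_norm_eq0 in H0. subst y. split.
    + intro n. rewrite proj_zero, nrm0. lra.
    + rewrite sub_diag, nrm0. lra.
  - assert (Hny : 0 < nrm y) by (pose proof (bl_norm_ge0 X y); lra).
    set (sc := r / (2 * nrm y)).
    assert (Hsc : 0 < sc) by (unfold sc; apply Rdiv_lt_0_compat; lra).
    assert (Hsc' : 0 < / sc) by (apply Rinv_0_lt_compat; auto).
    destruct (Hsmall (scal sc y)) with (eps := r/4) as [z' [Hz' Hyz]].
    { rewrite bl_normZ, Rabs_pos_eq by lra. unfold sc. field_simplify; lra. }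
    { lra. }
    exists (scal (/sc) z'). split.
    + intro n. rewrite proj_scal, bl_normZ, Rabs_pos_eq by lra.
      specialize (Hz' n). replace (2 * K / r * nrm y) with (/ sc * K)
        by (unfold sc; field; lra).
      apply Rmult_le_compat_l; lra.
    + replace y with (scal (/sc) (scal sc y)) at 1
        by (rewrite bl_scalA, Rinv_l, bl_scal1; auto; lra).
      rewrite <- scal_sub, bl_normZ, Rabs_pos_eq by lra.
      apply Rle_trans with (/sc * (r/4)).
      * apply Rmult_le_compat_l; lra.
      * right. unfold sc. field. lra.
Qed.

Section GeometricSequence.
Variable Z : nat -> X.
Variable K : R.
Hypothesis proj_rate : forall n m, nrm (sub (proj n (Z (S m))) (proj n (Z m))) <= K * (/2)^m.

Lemma proj_rate_nonneg : 0 <= K.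
Proof.
  pose proof (proj_rate O O) as H.
  pose proof (bl_norm_ge0 X (sub (proj 0 (Z 1%nat)) (proj 0 (Z 0%nat)))). simpl in H. lra.
Qed.

Lemma proj_rate_coef j m :
  Rabs (coef (Z (S m)) j - coef (Z m) j) <= (2 * K / nrm (e j)) * (/2)^m.
Proof.
  pose proof (basis_nrm_pos j). apply Rmult_le_reg_r with (nrm (e j)); auto.
  replace (2 * K / nrm (e j) * (/ 2) ^ m * nrm (e j)) with (2 * K * (/2)^m)
    by (field; lra).
  replace (coef (Z (S m)) j - coef (Z m) j) with (coef (sub (Z (S m)) (Z m)) j)
    by (rewrite coef_sub; auto).
  eapply Rle_trans. apply coef_abs_le. rewrite !proj_sub.
  pose proof (proj_rate (S j) m). pose proof (proj_rate j m). lra.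
Qed.

Lemma proj_rate_limit : exists b, forall n, norm_conv X (fun m => proj n (Z m)) (psum X b e n).
Proof.
  pose proof proj_rate_nonneg as HK.
  destruct (choice (fun j l => Un_cv (fun m => coef (Z m) j) l /\
     forall m, Rabs (l - coef (Z m) j) <= 2 * (2 * K / nrm (e j)) * (/2)^m)) as [b Hb].
  { intro j. apply geometric_limit_R. apply proj_rate_coef. }
  exists b. intros n.
  assert (Hdist : forall m, nrm (sub (psum X b e n) (proj n (Z m))) <= INR n * (4 * K) * (/2)^m).
  { intro m. unfold proj. rewrite <- psum_sub, Rmult_assoc. apply nrm_psum_le. intros j _.
    rewrite bl_normZ. destruct (Hb j) as [_ H]. specialize (H m).
    pose proof (basis_nrm_pos j).
    apply Rle_trans with (2 * (2 * K / nrm (e j)) * (/ 2) ^ m * nrm (e j)).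
    - apply Rmult_le_compat_r; lra.
    - right. field. lra. }
  intros eps He. destruct (half_pow_small_mul (INR n * (4 * K)) eps) as [N HN]; auto.
  { pose proof (pos_INR n). nra. }
  exists N. intros m Hm. eapply Rle_lt_trans. apply Hdist. apply HN; auto.
Qed.

Lemma proj_rate_conv y : norm_conv X Z y ->
  forall n, norm_conv X (fun m => proj n (Z m)) (proj n y).
Proof.
  intro HZ.
  pose proof proj_rate_nonneg as HK.
  destruct proj_rate_limit as [b Hb].
  assert (Hunif : forall n m, nrm (sub (psum X b e n) (proj n (Z m))) <= 2 * K * (/2)^m).
  { intros n m. apply (norm_conv_dist_le X _ _ _ _ m (Hb n)). intros m' Hm'.
    apply (geometric_tail_le X (fun m => proj n (Z m)) K (proj_rate n)). lia. }
  assert (Hy : norm_conv X (psum X b e) y).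
  { intros eps He.
    destruct (HZ (eps/3)) as [M1 HM1]; [lra|].
    destruct (half_pow_small_mul (2 * K) (eps/3)) as [M2 HM2]; [lra|lra|].
    set (m := max M1 M2).
    destruct (coef_conv (Z m) (eps/3)) as [N HN]; [lra|].
    exists N. intros n Hn.
    eapply Rle_lt_trans. apply (nrm_tri X y (Z m)).
    eapply Rle_lt_trans. apply Rplus_le_compat_l. apply (nrm_tri X (Z m) (proj n (Z m))).
    specialize (HM1 m (Nat.le_max_l _ _)). specialize (HM2 m (Nat.le_max_r _ _)).
    specialize (HN n Hn). fold (proj n (Z m)) in HN.
    specialize (Hunif n m). rewrite nrm_sub_sym in Hunif. lra. }
  apply coef_uniq in Hy. intro n. unfold proj at 2. rewrite <- Hy. apply Hb.
Qed.

End GeometricSequence.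

(* Successive approximation: with rem 0 = y and rem (m+1) = rem m - zf (rem m),
   y is the sum of the zf (rem m), whose projections are summable uniformly in n. *)
Lemma proj_uniformly_bounded : exists K, 0 <= K /\ forall n x, nrm (proj n x) <= K * nrm x.
Proof.
  destruct proj_bounded_half_approx as [M [HM Happrox]].
  destruct (choice _ Happrox) as [zf Hzf].
  exists (2 * M). split; [lra|]. intros n y.
  set (ny := nrm y). assert (Hny : 0 <= ny) by apply bl_norm_ge0.
  set (rem := fun i => Nat.iter i (fun w => sub w (zf w)) y).
  assert (Hrem : forall i, nrm (rem i) <= (/2)^i * ny).
  { induction i. unfold rem; simpl. unfold ny. lra.
    change (rem (S i)) with (sub (rem i) (zf (rem i))). destruct (Hzf (rem i)) as [_ H].
    rewrite half_pow_S. lra. }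
  set (Z := fun m => sub y (rem m)).
  assert (HZS : forall m, Z (S m) = add (Z m) (zf (rem m))).
  { intro m. unfold Z. change (rem (S m)) with (sub (rem m) (zf (rem m))).
    apply sub_sub_add. }
  assert (Hrate : forall n m, nrm (sub (proj n (Z (S m))) (proj n (Z m))) <= (M * ny) * (/2)^m).
  { intros n' m. rewrite HZS, proj_add, (bl_addC _ (proj n' (Z m))), sub_add_l.
    destruct (Hzf (rem m)) as [H _]. eapply Rle_trans. apply H.
    specialize (Hrem m). pose proof (half_pow_pos m). nra. }
  assert (HZ : norm_conv X Z y).
  { intros eps He. destruct (half_pow_small_mul ny eps) as [N HN]; auto.
    exists N. intros m Hm. unfold Z. rewrite sub_sub_r.
    specialize (Hrem m). specialize (HN m Hm). rewrite Rmult_comm in Hrem. lra. }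
  rewrite <- (sub0r X (proj n y)).
  apply (norm_conv_dist_le X _ _ _ _ 0 (proj_rate_conv Z _ Hrate y HZ n)).
  intros m _. rewrite <- (proj_zero n).
  replace zero with (Z O) by (unfold Z; simpl; apply sub_diag).
  pose proof (geometric_tail_le X (fun m => proj n (Z m)) _ (Hrate n) 0 m ltac:(lia))
    as Htail.
  simpl in Htail. lra.
Qed.

Lemma coef_dual j : in_dual X (fun x => coef x j).
Proof.
  split; [|split].
  - intros x y. rewrite coef_add. auto.
  - intros c x. rewrite coef_scal. auto.
  - destruct proj_uniformly_bounded as [K [HK HP]]. pose proof (basis_nrm_pos j).
    exists (2 * K / nrm (e j)). intro x.
    apply Rmult_le_reg_r with (nrm (e j)); auto.
    replace (2 * K / nrm (e j) * nrm x * nrm (e j)) with (K * nrm x + K * nrm x)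
      by (field; lra).
    eapply Rle_trans. apply coef_abs_le. pose proof (HP (S j) x). pose proof (HP j x). lra.
Qed.

End SchauderBasis.

Lemma schauder_basis_coef_dual (X : BanachLattice) (e : nat -> X) : schauder_basis X e ->
  exists a : nat -> X -> R, (forall j, in_dual X (a j)) /\
     (forall x, norm_conv X (psum X (fun j => a j x) e) x).
Proof.
  intro Hb.
  destruct (choice (fun x c => norm_conv X (psum X c e) x /\
     forall b, norm_conv X (psum X b e) x -> c = b)) as [coef Hc].
  { intro x. destruct (Hb x) as [c [H1 H2]]. exists c. split; auto. }
  exists (fun j x => coef x j). split.
  - intro j. apply (coef_dual X e coef).
    + intro x; apply Hc.
    + intros x b H. symmetry. apply Hc; auto.
  - intro x. apply Hc.
Qed.

Section RankOneSums.
Variable X : BanachLattice.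
Local Notation add := (bl_add X).
Local Notation scal := (bl_scal X).
Local Notation nrm := (bl_norm X).
Local Notation le := (bl_le X).
Local Notation zero := (bl_zero X).
Local Notation abs := (babs X).

Definition rank_one := ((X -> R) * X)%type.

Fixpoint isum (L : list rank_one) (x : X) : X :=
  match L with
  | [] => zero
  | t :: L' => add (scal (fst t x) (snd t)) (isum L' x)
  end.

Definition iscale (c : R) (L : list rank_one) : list rank_one :=
  map (fun t => ((fun x => c * fst t x), snd t)) L.

Lemma isum_app L1 L2 x : isum (L1 ++ L2) x = add (isum L1 x) (isum L2 x).
Proof.
  induction L1; simpl. rewrite add0l; auto. rewrite IHL1, bl_addA. auto.
Qed.

Lemma isum_iscale c L x : isum (iscale c L) x = scal c (isum L x).
Proof.
  induction L; simpl. rewrite scal0r; auto.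
  rewrite IHL, bl_scalDr, bl_scalA. auto.
Qed.

Lemma firstn_iscale p c L : firstn p (iscale c L) = iscale c (firstn p L).
Proof. apply firstn_map. Qed.

Lemma isum_repeat k L x : isum (concat (repeat L k)) x = scal (INR k) (isum L x).
Proof.
  induction k. simpl. rewrite scal0l; auto.
  simpl concat. rewrite isum_app, IHk, S_INR, bl_scalDl, bl_scal1, bl_addC. auto.
Qed.

Lemma isum_lincomb (f : X -> R) (l : list (R * X)) x :
  isum (map (fun p => ((fun y => fst p * f y), snd p)) l) x = scal (f x) (lincomb X l).
Proof.
  induction l as [|[c v] l IH]; simpl. rewrite scal0r; auto.
  rewrite IH, bl_scalDr, bl_scalA, Rmult_comm. auto.
Qed.

Lemma firstn_repeat k (L : list rank_one) p : exists r p', (r <= k)%nat /\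
  firstn p (concat (repeat L k)) = concat (repeat L r) ++ firstn p' L.
Proof.
  revert p. induction k; intro p.
  - exists O, O. simpl. rewrite firstn_nil. auto.
  - simpl concat. rewrite firstn_app.
    destruct (Nat.le_gt_cases p (length L)).
    + exists O, p. split. lia. replace (p - length L)%nat with O by lia. simpl.
      rewrite app_nil_r. auto.
    + destruct (IHk (p - length L)%nat) as [r [p' [Hr Hp]]].
      exists (S r), p'. split. lia. rewrite Hp, firstn_all2 by lia. simpl.
      rewrite app_assoc. auto.
Qed.

Lemma firstn_S_nth (L : list rank_one) p d : (p < length L)%nat ->
  firstn (S p) L = firstn p L ++ [nth p L d].
Proof.
  revert p. induction L; intros p Hp; simpl in Hp. lia.
  destruct p. reflexivity.
  change (a :: firstn (S p) L = (a :: firstn p L) ++ [nth p L d]).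
  rewrite IHL by lia. reflexivity.
Qed.

Lemma in_dual_scale c f : in_dual X f -> in_dual X (fun x => c * f x).
Proof.
  intros [H1 [H2 [C H3]]]. split; [|split].
  - intros x y. rewrite H1. ring.
  - intros a x. rewrite H2. ring.
  - exists (Rabs c * C). intro x. rewrite Rabs_mult, Rmult_assoc.
    apply Rmult_le_compat_l. apply Rabs_pos. auto.
Qed.

Lemma in_dual_zero : in_dual X (fun _ => 0).
Proof.
  split; [|split]. intros; ring. intros; ring. exists 0. intro. rewrite Rabs_R0. lra.
Qed.

Lemma in_dual_bound f : in_dual X f -> exists C, 0 <= C /\ forall x, Rabs (f x) <= C * nrm x.
Proof.
  intros [_ [_ [C H]]]. exists (Rabs C). split. apply Rabs_pos. intro x.
  eapply Rle_trans. apply H. apply Rmult_le_compat_r. apply bl_norm_ge0. apply RRle_abs.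
Qed.

Definition admissible (D : X -> Prop) (t : rank_one) := in_dual X (fst t) /\ D (snd t).

Lemma admissible_iscale D c L :
  Forall (admissible D) L -> Forall (admissible D) (iscale c L).
Proof.
  intro H. apply Forall_forall. intros t Ht. unfold iscale in Ht.
  apply in_map_iff in Ht. destruct Ht as [[f d] [Hfd Hin]]. subst t.
  rewrite Forall_forall in H. destruct (H _ Hin) as [H1 H2]. split; simpl; auto.
  apply in_dual_scale; auto.
Qed.

Lemma isum_prefix_dominated D (L : list rank_one) : Forall (admissible D) L ->
  exists u, le zero u /\ forall x p, le (abs (isum (firstn p L) x)) (scal (nrm x) u).
Proof.
  induction L as [|[f d] L IH]; intro HL.
  - exists zero. split. apply bl_le_refl. intros x p. rewrite firstn_nil. simpl.
    rewrite abs_zero, scal0r. apply bl_le_refl.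
  - inversion HL as [|? ? [Hf Hd] HL']; subst. destruct (IH HL') as [u [Hu H]].
    destruct (in_dual_bound f Hf) as [C [HC Hb]].
    assert (Hu' : le zero (add (scal C (abs d)) u)).
    { apply add_nonneg; auto. apply scal_nonneg; auto. apply abs_nonneg. }
    exists (add (scal C (abs d)) u). split; auto.
    intros x p. destruct p.
    + simpl. rewrite abs_zero. apply scal_nonneg; auto. apply bl_norm_ge0.
    + simpl firstn. simpl isum. eapply bl_le_trans. apply abs_add.
      rewrite bl_scalDr. apply le_add2; [|apply H].
      eapply bl_le_trans. apply abs_scal. rewrite bl_scalA.
      apply scal_mono. apply abs_nonneg. simpl. rewrite Rmult_comm. apply Hb.
Qed.

(* W := sum_k 2^k v_k converges, and the positive cone is closed. *)
Lemma common_regulator (v : nat -> X) : (forall n, le zero (v n)) ->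
  (forall n, nrm (v n) <= 2 * (/4)^n) ->
  exists W, le zero W /\ forall n, le (v n) (scal ((/2)^n) W).
Proof.
  intros Hv Hn. set (s := psum X (fun k => 2^k) v).
  assert (Hs : forall m, nrm (bsub X (s (S m)) (s m)) <= 2 * (/2)^m).
  { intro m. unfold s. rewrite psum_S_sub, bl_normZ, Rabs_pos_eq by (apply pow_le; lra).
    specialize (Hn m). replace ((/2)^m) with (2^m * (/4)^m).
    - pose proof (pow_le 2 m ltac:(lra)). nra.
    - rewrite <- Rpow_mult_distr. f_equal. field. }
  destruct (geometric_limit X s 2 Hs) as [W [HW _]].
  assert (Hs0 : forall m, le zero (s m)).
  { intro m. apply psum_nonneg. intro j. split; auto. apply pow_le; lra. }
  assert (Hsn : forall n k, le (scal (2^n) (v n)) (s (k + S n)%nat)).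
  { intros n k. induction k.
    - simpl. unfold s. simpl. fold (s n). rewrite bl_addC. apply le_add_r; auto.
    - eapply bl_le_trans. apply IHk. rewrite Nat.add_succ_l. unfold s at 2. simpl.
      fold (s (k + S n)%nat). apply le_add_r. apply scal_nonneg; auto. apply pow_le; lra. }
  exists W. split. apply (norm_conv_ge0 X s W Hs0 HW).
  intro n.
  assert (Hc : le zero (bsub X W (scal (2^n) (v n)))).
  { apply (norm_conv_ge0 X (fun k => bsub X (s (k + S n)%nat) (scal (2^n) (v n)))).
    - intro k. apply le_sub0. auto.
    - intros eps He. destruct (HW eps He) as [N HN]. exists N. intros k Hk.
      rewrite subBB, sub_diag, sub0r. apply HN. lia. }
  apply le_sub0_inv in Hc. apply (bl_le_scal X ((/2)^n)) in Hc.
  - rewrite bl_scalA, <- Rpow_mult_distr in Hc.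
    replace (/2 * 2) with 1 in Hc by field. rewrite pow1, bl_scal1 in Hc. auto.
  - left. apply half_pow_pos.
Qed.

End RankOneSums.

Section Flattening.
Variable X : BanachLattice.
Local Notation add := (bl_add X).
Local Notation scal := (bl_scal X).
Local Notation zero := (bl_zero X).

Variable block : nat -> list (rank_one X).
Variable dflt : rank_one X.
Hypothesis dflt_zero : forall x, fst dflt x = 0.

(* cursor i = (c, p): the i-th term of the flattened sequence is the p-th term of
   block c.  An empty block is stepped over in one step, which contributes dflt. *)
Fixpoint cursor (i : nat) : nat * nat :=
  match i with
  | O => (O, O)
  | S i' => let (c, p) := cursor i' in
            if Nat.ltb (S p) (length (block c)) then (c, S p) else (S c, O)
  end.

Definition flat (i : nat) : rank_one X := nth (snd (cursor i)) (block (fst (cursor i))) dflt.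

Fixpoint blocks_sum (c : nat) (x : X) : X :=
  match c with
  | O => zero
  | S c' => add (blocks_sum c' x) (isum X (block c') x)
  end.

Lemma cursor_in_block i :
  (snd (cursor i) < length (block (fst (cursor i))) \/ snd (cursor i) = O)%nat.
Proof.
  induction i. simpl. auto. simpl. destruct (cursor i) as [c p]. simpl in *.
  destruct (Nat.ltb_spec (S p) (length (block c))); simpl; auto.
Qed.

Lemma isum_block_last c p : S p = length (block c) -> forall x,
  isum X (block c) x = add (isum X (firstn p (block c)) x)
    (scal (fst (nth p (block c) dflt) x) (snd (nth p (block c) dflt))).
Proof.
  intros Hp x. rewrite <- (firstn_all (block c)) at 1. rewrite <- Hp.
  rewrite (firstn_S_nth X _ _ dflt) by lia. rewrite isum_app. simpl.
  rewrite bl_add0. auto.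
Qed.

Lemma psum_flat x i : psum X (fun j => fst (flat j) x) (fun j => snd (flat j)) i =
  add (blocks_sum (fst (cursor i)) x) (isum X (firstn (snd (cursor i)) (block (fst (cursor i)))) x).
Proof.
  induction i. simpl. rewrite bl_add0. auto.
  simpl psum. rewrite IHi. unfold flat at 1 2. pose proof (cursor_in_block i) as Hinv.
  simpl cursor. destruct (cursor i) as [c p]. simpl in *.
  destruct (Nat.ltb_spec (S p) (length (block c))); cbn [fst snd].
  - rewrite (firstn_S_nth X _ _ dflt) by lia. rewrite isum_app. simpl.
    rewrite bl_add0, bl_addA. auto.
  - change (firstn 0 (block (S c))) with (@nil (rank_one X)). cbn [isum blocks_sum].
    rewrite bl_add0, <- bl_addA. f_equal.
    destruct (Nat.lt_ge_cases p (length (block c))) as [Hl|Hge].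
    + rewrite (isum_block_last c p) by lia. auto.
    + assert (p = O) by (destruct Hinv; lia). subst p.
      destruct (block c) as [|t L] eqn:E.
      * simpl. rewrite dflt_zero, scal0l, bl_add0. auto.
      * simpl in Hge. lia.
Qed.

Lemma cursor_block_mono i k : (fst (cursor i) <= fst (cursor (i + k)))%nat.
Proof.
  induction k. rewrite Nat.add_0_r. lia.
  rewrite Nat.add_succ_r. simpl. destruct (cursor (i + k)) as [c p]. simpl in *.
  destruct (Nat.ltb (S p) (length (block c))); simpl; lia.
Qed.

Lemma cursor_leaves_block d i :
  (length (block (fst (cursor i))) - snd (cursor i) <= d)%nat ->
  exists i', (fst (cursor i) < fst (cursor i'))%nat.
Proof.
  revert i. induction d; intros i Hd.
  - exists (S i). simpl. destruct (cursor i) as [c p]. simpl in *.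
    destruct (Nat.ltb_spec (S p) (length (block c))); simpl; lia.
  - destruct (Nat.ltb (S (snd (cursor i))) (length (block (fst (cursor i))))) eqn:E.
    + destruct (IHd (S i)) as [i' Hi'].
      { simpl. destruct (cursor i) as [c p]. simpl in *. rewrite E. simpl.
        apply Nat.ltb_lt in E. lia. }
      exists i'. simpl in Hi'. destruct (cursor i) as [c p]. simpl in *.
      rewrite E in Hi'. simpl in Hi'. auto.
    + exists (S i). simpl. destruct (cursor i) as [c p]. simpl in *. rewrite E. simpl. lia.
Qed.

Lemma cursor_block_unbounded N : exists I, forall i, (i >= I)%nat -> (fst (cursor i) >= N)%nat.
Proof.
  assert (H : forall N, exists I, (fst (cursor I) >= N)%nat).
  { clear N. intro N. induction N. exists O. lia. destruct IHN as [I HI].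
    destruct (cursor_leaves_block _ I (le_n _)) as [i' Hi']. exists i'. lia. }
  destruct (H N) as [I HI]. exists I. intros i Hi.
  replace i with (I + (i - I))%nat by lia. pose proof (cursor_block_mono I (i - I)). lia.
Qed.

End Flattening.

Section Construction.
Variable X : BanachLattice.
Local Notation add := (bl_add X).
Local Notation scal := (bl_scal X).
Local Notation nrm := (bl_norm X).
Local Notation le := (bl_le X).
Local Notation zero := (bl_zero X).
Local Notation sub := (bsub X).
Local Notation abs := (babs X).

Variable e : nat -> X.
Variable a : nat -> X -> R.
Variable D : X -> Prop.
Hypothesis a_dual : forall j, in_dual X (a j).
Variable C : nat -> R.
Hypothesis C_bound : forall j, 0 <= C j /\ forall x, Rabs (a j x) <= C j * nrm x.

Definition tolerance n j := (/8)^n / ((C j + 1) * (INR n + 1)).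

Lemma tolerance_pos n j : 0 < tolerance n j.
Proof.
  apply Rdiv_lt_0_compat. apply pow_lt; lra.
  pose proof (pos_INR n). destruct (C_bound j). nra.
Qed.

Variable comb : nat -> nat -> list (R * X).
Hypothesis comb_spec : forall n j, Forall (fun p => D (snd p)) (comb n j) /\
   nrm (sub (e j) (lincomb X (comb n j))) <= tolerance n j.

Definition approx n j := lincomb X (comb n j).
Definition expand j (L : list (R * X)) : list (rank_one X) :=
  map (fun p => ((fun y => fst p * a j y), snd p)) L.
Definition stage_items n k := concat (map (fun j => expand j (comb n j)) (seq 0 k)).
Definition stage n x := isum X (stage_items n n) x.
Definition step_items n := stage_items (S n) (S n) ++ iscale X (-1) (stage_items n n).
Definition step n x := sub (stage (S n) x) (stage n x).
Definition stage_error n := psum X C (fun j => abs (sub (e j) (approx n j))) n.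

Lemma isum_stage_items n k x : isum X (stage_items n k) x = psum X (fun j => a j x) (approx n) k.
Proof.
  induction k. reflexivity.
  unfold stage_items. rewrite seq_S, map_app, concat_app, isum_app. fold (stage_items n k).
  rewrite IHk. simpl. rewrite app_nil_r. unfold expand. rewrite isum_lincomb. auto.
Qed.

Lemma isum_step_items n x : isum X (step_items n) x = step n x.
Proof.
  unfold step_items, step, stage. rewrite isum_app, isum_iscale, scalN1. reflexivity.
Qed.

Lemma stage_close_to_psum n x :
  le (abs (sub (psum X (fun j => a j x) e n) (stage n x))) (scal (nrm x) (stage_error n)).
Proof.
  unfold stage. rewrite isum_stage_items, <- psum_vsub. apply abs_psum_le. intros j _.
  eapply bl_le_trans. apply abs_scal. rewrite bl_scalA.
  apply scal_mono. apply abs_nonneg. destruct (C_bound j) as [_ H]. rewrite Rmult_comm. apply H.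
Qed.

Lemma stage_error_nonneg n : le zero (stage_error n).
Proof. apply psum_nonneg. intro j. split. apply C_bound. apply abs_nonneg. Qed.

Lemma stage_error_nrm n : nrm (stage_error n) <= (/8)^n.
Proof.
  pose proof (pos_INR n). pose proof (pow_lt (/8) n ltac:(lra)).
  unfold stage_error. eapply Rle_trans.
  - apply (nrm_psum_le X _ _ _ ((/8)^n / (INR n + 1))).
    intros j _. rewrite bl_normZ, nrm_abs. destruct (C_bound j) as [HCj _].
    rewrite Rabs_pos_eq by auto. destruct (comb_spec n j) as [_ Hj]. fold (approx n j) in Hj.
    unfold tolerance in Hj.
    apply Rle_trans with ((C j + 1) * ((/ 8) ^ n / ((C j + 1) * (INR n + 1)))).
    + pose proof (bl_norm_ge0 X (sub (e j) (approx n j))). nra.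
    + right. field. lra.
  - assert (0 < (/8)^n / (INR n + 1)) by (apply Rdiv_lt_0_compat; lra).
    apply Rle_trans with ((INR n + 1) * ((/8)^n / (INR n + 1))).
    + nra.
    + right. field. lra.
Qed.

Lemma admissible_stage_items n : Forall (admissible X D) (stage_items n n).
Proof.
  apply Forall_forall. intros t Ht. unfold stage_items in Ht.
  apply in_concat in Ht. destruct Ht as [L [HL Ht]].
  apply in_map_iff in HL. destruct HL as [j [HLj _]]. subst L.
  unfold expand in Ht. apply in_map_iff in Ht. destruct Ht as [[c d] [Hcd Hin]]. subst t.
  split; simpl. apply in_dual_scale, a_dual.
  destruct (comb_spec n j) as [HF _]. rewrite Forall_forall in HF. apply (HF _ Hin).
Qed.

Lemma admissible_step_items n : Forall (admissible X D) (step_items n).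
Proof.
  apply Forall_app. split. apply admissible_stage_items.
  apply admissible_iscale, admissible_stage_items.
Qed.

Lemma step_items_dominated : exists u : nat -> X, forall n, le zero (u n) /\
   forall x p, le (abs (isum X (firstn p (step_items n)) x)) (scal (nrm x) (u n)).
Proof.
  apply (choice (fun n w => le zero w /\ forall x p,
    le (abs (isum X (firstn p (step_items n)) x)) (scal (nrm x) w))).
  intro n. apply (isum_prefix_dominated X D). apply admissible_step_items.
Qed.

Variable u : nat -> X.
Hypothesis u_spec : forall n, le zero (u n) /\
   forall x p, le (abs (isum X (firstn p (step_items n)) x)) (scal (nrm x) (u n)).
Variable mult : nat -> nat.
Hypothesis mult_spec : forall n, (1 <= mult n)%nat /\ nrm (u n) <= INR (mult n) * (/4)^n.

(* Partial sums inside step_items n may be as large as ||x|| u_n; spreading the step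
   over [mult n] copies of weight [1 / mult n] divides this by [mult n]. *)
Definition block n := concat (repeat (iscale X (/ INR (mult n)) (step_items n)) (mult n)).
Definition block_error n := add (stage_error n) (scal (/ INR (mult n)) (u n)).

Lemma mult_pos n : 0 < INR (mult n).
Proof. destruct (mult_spec n) as [H _]. apply lt_0_INR. lia. Qed.

Lemma block_error_nonneg n : le zero (block_error n).
Proof.
  apply add_nonneg. apply stage_error_nonneg.
  apply scal_nonneg. left; apply Rinv_0_lt_compat, mult_pos. apply u_spec.
Qed.

Lemma block_error_nrm n : nrm (block_error n) <= 2 * (/4)^n.
Proof.
  unfold block_error. eapply Rle_trans. apply bl_normD. rewrite bl_normZ.
  pose proof (mult_pos n). rewrite Rabs_pos_eq by (left; apply Rinv_0_lt_compat; auto).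
  pose proof (stage_error_nrm n). assert ((/8)^n <= (/4)^n) by (apply pow_incr; lra).
  destruct (mult_spec n) as [_ H2].
  assert (/ INR (mult n) * nrm (u n) <= (/4)^n).
  { apply Rmult_le_reg_l with (INR (mult n)); auto.
    rewrite <- Rmult_assoc, Rinv_r by lra. lra. }
  lra.
Qed.

Lemma isum_block n x : isum X (block n) x = step n x.
Proof.
  unfold block. rewrite isum_repeat, isum_iscale, bl_scalA, Rinv_r, bl_scal1.
  - apply isum_step_items.
  - pose proof (mult_pos n). lra.
Qed.

Lemma blocks_sum_stage n x : blocks_sum X block n x = stage n x.
Proof.
  induction n. reflexivity. simpl. rewrite IHn, isum_block. unfold step.
  rewrite bl_addC. apply add_sub.
Qed.

Lemma admissible_block n : Forall (admissible X D) (block n).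
Proof.
  apply Forall_forall. intros t Ht. unfold block in Ht.
  apply in_concat in Ht. destruct Ht as [L [HL Ht]].
  apply repeat_spec in HL. subst L.
  pose proof (admissible_iscale X D (/ INR (mult n)) _ (admissible_step_items n)) as H.
  rewrite Forall_forall in H. auto.
Qed.

Lemma block_prefix_bound n p x :
  le (abs (isum X (firstn p (block n)) x)) (add (abs (step n x)) (scal (nrm x) (block_error n))).
Proof.
  unfold block.
  destruct (firstn_repeat X (mult n) (iscale X (/ INR (mult n)) (step_items n)) p)
    as [r [p' [Hr Hp]]].
  rewrite Hp, isum_app, isum_repeat, firstn_iscale, !isum_iscale, isum_step_items.
  pose proof (mult_pos n). assert (Hinv : 0 < / INR (mult n)) by (apply Rinv_0_lt_compat; auto).
  eapply bl_le_trans. apply abs_add. apply le_add2.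
  - rewrite bl_scalA. eapply bl_le_trans. apply abs_scal.
    apply bl_le_trans with (scal 1 (abs (step n x))); [|rewrite bl_scal1; apply bl_le_refl].
    apply scal_mono. apply abs_nonneg.
    rewrite Rabs_pos_eq by (apply Rmult_le_pos; [apply pos_INR|lra]).
    apply Rmult_le_reg_l with (INR (mult n)); auto.
    rewrite <- Rmult_assoc, (Rmult_comm (INR (mult n))), Rmult_assoc, Rinv_r by lra.
    rewrite Rmult_1_r, Rmult_1_r. apply le_INR; auto.
  - eapply bl_le_trans. apply abs_scal. rewrite Rabs_pos_eq by lra.
    eapply bl_le_trans. apply bl_le_scal; [lra|apply u_spec].
    rewrite bl_scalA, Rmult_comm, <- bl_scalA. apply bl_le_scal. apply bl_norm_ge0.
    unfold block_error. rewrite bl_addC. apply le_add_r. apply stage_error_nonneg.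
Qed.

Variable W : X.
Hypothesis W_spec : le zero W /\ forall n, le (block_error n) (scal ((/2)^n) W).
Hypothesis a_uconv : forall x, u_conv X (psum X (fun j => a j x) e) x.
Variable d0 : X.
Hypothesis d0_in : D d0.

Lemma stage_uconv x wP : le zero wP ->
  (forall eps, eps > 0 -> exists N, forall n, (n >= N)%nat ->
     le (abs (sub x (psum X (fun j => a j x) e n))) (scal eps wP)) ->
  forall eps, eps > 0 -> exists N, forall n, (n >= N)%nat ->
    le (abs (sub x (stage n x))) (add (scal eps wP) (scal eps (scal (nrm x) W))) /\
    le (scal (nrm x) (block_error n)) (add (scal eps wP) (scal eps (scal (nrm x) W))).
Proof.
  intros HwP HP eps He. pose proof (bl_norm_ge0 X x) as Hnx. destruct W_spec as [HW0 HWv].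
  destruct (HP eps He) as [N1 HN1]. destruct (half_pow_small eps He) as [N2 HN2].
  assert (Hv : forall n, (n >= N2)%nat ->
    le (scal (nrm x) (block_error n)) (scal eps (scal (nrm x) W))).
  { intros n Hn. rewrite bl_scalA, Rmult_comm, <- bl_scalA. apply bl_le_scal; auto.
    eapply bl_le_trans. apply HWv. apply scal_mono; auto. specialize (HN2 n Hn). lra. }
  exists (max N1 N2). intros n Hn. split.
  - eapply bl_le_trans. apply (abs_tri X x (psum X (fun j => a j x) e n)).
    apply le_add2. apply HN1. lia.
    eapply bl_le_trans. apply stage_close_to_psum.
    apply bl_le_trans with (scal (nrm x) (block_error n)); [|apply Hv; lia].
    apply bl_le_scal; auto. unfold block_error. apply le_add_r. apply scal_nonneg.
    left; apply Rinv_0_lt_compat, mult_pos. apply u_spec.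
  - eapply bl_le_trans. apply Hv; lia. rewrite bl_addC.
    apply le_add_r. apply scal_nonneg; auto. lra.
Qed.

(* Padding term for empty blocks; its vector is taken in D so that all frame vectors are. *)
Definition dflt : rank_one X := ((fun _ : X => 0), d0).
Definition frame_vec i := snd (flat X block dflt i).
Definition frame_fun i := fst (flat X block dflt i).

(* A partial sum ending inside block c is stage c plus a prefix of block c; both are
   close to x once c is large, the prefix by block_prefix_bound. *)
Lemma frame_uconv x : u_conv X (psum X (fun j => frame_fun j x) frame_vec) x.
Proof.
  destruct (a_uconv x) as [wP [HwP HP]]. pose proof (bl_norm_ge0 X x) as Hnx.
  destruct W_spec as [HW0 _].
  exists (scal 4 (add wP (scal (nrm x) W))). split.
  { apply scal_nonneg. lra. apply add_nonneg; auto. apply scal_nonneg; auto. }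
  intros eps He.
  set (G := add (scal eps wP) (scal eps (scal (nrm x) W))).
  destruct (stage_uconv x wP HwP HP eps He) as [N HN].
  destruct (cursor_block_unbounded X block N) as [I HI].
  exists I. intros i Hi. unfold frame_fun, frame_vec.
  rewrite (psum_flat X block dflt (fun _ => eq_refl) x i).
  specialize (HI i Hi). set (c := fst (cursor X block i)) in *.
  rewrite blocks_sum_stage, sub_add_r.
  rewrite bl_scalA, Rmult_comm, <- bl_scalA, bl_scalDr. fold G. rewrite <- scal_add4.
  destruct (HN c HI) as [Hc Hvc]. destruct (HN (S c) ltac:(lia)) as [HSc _].
  eapply bl_le_trans. apply abs_sub_le. apply le_add2; auto.
  eapply bl_le_trans. apply block_prefix_bound. apply le_add2; auto.
  unfold step. eapply bl_le_trans. apply (abs_tri X _ x). rewrite abs_sub_sym.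
  apply le_add2; auto.
Qed.

Lemma frame_admissible i : in_dual X (frame_fun i) /\ D (frame_vec i).
Proof.
  unfold frame_fun, frame_vec, flat.
  destruct (nth_in_or_default (snd (cursor X block i)) (block (fst (cursor X block i))) dflt)
    as [Hin|Hd].
  - pose proof (admissible_block (fst (cursor X block i))) as H.
    rewrite Forall_forall in H. apply H. auto.
  - rewrite Hd. split. apply in_dual_zero. auto.
Qed.

Lemma frame_is_u_frame : u_frame X frame_vec frame_fun /\ forall j, D (frame_vec j).
Proof.
  split; [split; [split|]|].
  - intro j. apply frame_admissible.
  - intro x. apply u_conv_norm_conv, frame_uconv.
  - apply frame_uconv.
  - intro j. apply frame_admissible.
Qed.

End Construction.

Lemma in_dual_bounds (X : BanachLattice) (a : nat -> X -> R) : (forall j, in_dual X (a j)) ->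
  exists C : nat -> R, forall j, 0 <= C j /\ forall x, Rabs (a j x) <= C j * bl_norm X x.
Proof.
  intro Ha. apply (choice (fun j c => 0 <= c /\ forall x, Rabs (a j x) <= c * bl_norm X x)).
  intro j. apply in_dual_bound, Ha.
Qed.

Lemma span_dense_approx (X : BanachLattice) (D : X -> Prop) (e : nat -> X)
  (tol : nat -> nat -> R) : span_dense X D -> (forall n j, 0 < tol n j) ->
  exists comb : nat -> nat -> list (R * X), forall n j,
    Forall (fun p => D (snd p)) (comb n j) /\
    bl_norm X (bsub X (e j) (lincomb X (comb n j))) <= tol n j.
Proof.
  intros Hd Htol.
  destruct (choice (fun (nj : nat * nat) L => Forall (fun p => D (snd p)) L /\
      bl_norm X (bsub X (e (snd nj)) (lincomb X L)) <= tol (fst nj) (snd nj))) as [f Hf].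
  { intros [n j]. destruct (Hd (e j) _ (Htol n j)) as [y [[L [HL Hy]] Hxy]]. subst y.
    exists L. simpl. split; auto. lra. }
  exists (fun n j => f (n, j)). intros n j. apply (Hf (n, j)).
Qed.

Lemma nat_multiplier (r q : nat -> R) : (forall n, 0 < q n) ->
  exists m : nat -> nat, forall n, (1 <= m n)%nat /\ r n <= INR (m n) * q n.
Proof.
  intro Hq. apply (choice (fun n (k : nat) => (1 <= k)%nat /\ r n <= INR k * q n)).
  intro n. destruct (INR_unbounded (r n / q n)) as [k Hk]. specialize (Hq n).
  exists (S k). split; [lia|]. rewrite S_INR.
  apply Rmult_lt_compat_r with (r := q n) in Hk; auto.
  replace (r n / q n * q n) with (r n) in Hk by (field; lra). nra.
Qed.

Lemma span_dense_inhabited (X : BanachLattice) (D : X -> Prop) (e : nat -> X) :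
  schauder_basis X e -> span_dense X D -> exists d, D d.
Proof.
  intros Hsb Hd. apply NNPP. intro Hno.
  assert (Hz : forall x, x = bl_zero X).
  { intro x. apply bl_norm_eq0. apply Rle_antisym; [|apply bl_norm_ge0].
    apply Rle_of_le_plus_eps. intros eps He.
    destruct (Hd x eps He) as [y [[L [HL Hy]] Hxy]].
    destruct L as [|p L].
    - simpl in Hy. subst y. rewrite sub0r in Hxy. lra.
    - inversion HL. exfalso. apply Hno. eauto. }
  destruct (Hsb (bl_zero X)) as [b [_ Hb]].
  assert (Hconst : forall c : R, b = (fun _ => c)).
  { intro c. apply Hb. intros eps He. exists O. intros.
    rewrite (Hz (bsub X _ _)), nrm0. lra. }
  pose proof (Hconst 0) as H0. pose proof (Hconst 1) as H1. rewrite H0 in H1.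
  apply (f_equal (fun f => f O)) in H1. lra.
Qed.

Lemma u_frame_of_u_expansion (X : BanachLattice) (D : X -> Prop) (e : nat -> X)
  (a : nat -> X -> R) : (forall j, in_dual X (a j)) ->
  (forall x, u_conv X (psum X (fun j => a j x) e) x) ->
  span_dense X D -> (exists d, D d) ->
  exists (xs : nat -> X) (fs : nat -> X -> R), u_frame X xs fs /\ (forall j, D (xs j)).
Proof.
  intros Ha Hua Hd [d0 Hd0].
  destruct (in_dual_bounds X a Ha) as [C HC].
  destruct (span_dense_approx X D e (tolerance C) Hd (tolerance_pos X a C HC)) as [comb Hcomb].
  destruct (step_items_dominated X e a D Ha C comb Hcomb) as [u Hu].
  destruct (nat_multiplier (fun n => bl_norm X (u n)) (fun n => (/4)^n)) as [m Hm].
  { intro n. apply pow_lt. lra. }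
  destruct (common_regulator X (block_error X e C comb u m)) as [W HW].
  { apply (block_error_nonneg X e a C HC comb u Hu m Hm). }
  { apply (block_error_nrm X e a D C HC comb Hcomb u m Hm). }
  exists (frame_vec X a comb m d0), (frame_fun X a comb m d0).
  apply (frame_is_u_frame X e a D Ha C HC comb Hcomb u Hu m Hm W HW Hua d0 Hd0).
Qed.

Theorem theorem4p4 (X : BanachLattice) (D : X -> Prop) :
  (exists xs : nat -> X, bibasis X xs) ->
  span_dense X D ->
  exists (xs : nat -> X) (fs : nat -> X -> R),
    u_frame X xs fs /\ (forall j, D (xs j)).
Proof.
  intros [e [Hbasis Hbibasis]] Hd.
  destruct (schauder_basis_coef_dual X e Hbasis) as [a [Ha Hexp]].
  apply (u_frame_of_u_expansion X D e a Ha).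
  - intro x. apply Hbibasis, Hexp.
  - exact Hd.
  - apply (span_dense_inhabited X D e Hbasis Hd).
Qed.
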